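(* Let $f$ be a $C$-class classifier with $C\ge 2$ whose outputs satisfy $f(x)\in(0,1)^C$, $\sum_c f(x)_c=1$ for all $x$, and let $S$, $\mathcal{D}$ be as in the context. Let $\mathcal{Q}_{cvx}$ be the family of all convex subsets of $\mathbb{R}^{2C}$. For every threshold $\tau\in\mathbb{R}$ and every $m\in\{m_{msp,\tau},m_{ent,\tau},m_{ce,\tau},m_{me,\tau}\}$, $$\mathrm{Adv}(m;f,S,\mathcal{D})\le D_{\mathcal{Q}_{cvx}}(S,\mathcal{D}).$$
   Context: A labeled data point is $z=(x,y)$ with $y\in\{0,1\}^C$ one-hot; $f(x)_c$ denotes the $c$-th coordinate of $f(x)$. $S$ is a finite training set (multiset) of labeled points, $\mathbb{P}_{z\sim S}$ is uniform over $S$, and $\mathcal{D}$ is a probability distribution on labeled points. An MIA is a map $m(z,f)\in\{0,1\}$ with advantage $\mathrm{Adv}(m;f,S,\mathcal{D}):=\mathbb{P}_{z\sim S}(m(z,f)=1)-\mathbb{P}_{z\sim\mathcal{D}}(m(z,f)=1)$. For a score function $h$ and threshold $\tau$, the thresholded MIA is $m_{h,\tau}(z,f)=\mathbb{1}[h(z,f)<\tau]$. The scores are: $msp(z,f)=-\max_{c\in[C]}f(x)_c$; $ent(z,f)=-\sum_{c\in[C]}f(x)_c\log f(x)_c$; $ce(z,f)=-\sum_{c\in[C]}y_c\log f(x)_c$; $me(z,f)=-\sum_{c\in[C]}\big((1-f(x)_c)\log(f(x)_c)\,y_c+f(x)_c\log(1-f(x)_c)\,(1-y_c)\big)$. For $Q\subseteq\mathbb{R}^{2C}$,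 $D(S,\mathcal{D}\mid Q):=\left|\mathbb{P}_{(x,y)\sim S}((f(x),y)\in Q)-\mathbb{P}_{(x,y)\sim\mathcal{D}}((f(x),y)\in Q)\right|$, and for a family $\mathcal{Q}$, $D_{\mathcal{Q}}(S,\mathcal{D}):=\sup_{Q\in\mathcal{Q}}D(S,\mathcal{D}\mid Q)$. *)

From HB Require Import structures.
From mathcomp Require Import all_boot all_order all_algebra.
From mathcomp Require Import all_classical all_reals all_analysis.
Set Implicit Arguments. Unset Strict Implicit. Unset Printing Implicit Defensive.
Import Order.TTheory GRing.Theory Num.Theory.
Local Open Scope classical_set_scope.
Local Open Scope ring_scope.

(* Class labels 'I_n.+1 form a (discrete) measurable space, so that labeled
   points X * 'I_C form a measurable space (product sigma-algebra). *)
HB.instance Definition _ (n : nat) := isPointed.Build 'I_n.+1 ord0.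
HB.instance Definition _ (n : nat) := @isMeasurable.Build default_measure_display
  'I_n.+1 discrete_measurable discrete_measurable0
  discrete_measurableC discrete_measurableU.

Section Defs.
Variable R : realType.

Definition onehot (C : nat) (c : 'I_C) : 'rV[R]_C := \row_j (j == c)%:R.

Definition msp_s C (p y : 'rV[R]_C) : R := - \big[Num.max/0]_(c < C) p ord0 c.
Definition ent_s C (p y : 'rV[R]_C) : R := - \sum_(c < C) p ord0 c * ln (p ord0 c).
Definition ce_s C (p y : 'rV[R]_C) : R := - \sum_(c < C) y ord0 c * ln (p ord0 c).
Definition me_s C (p y : 'rV[R]_C) : R :=
  - \sum_(c < C) ((1 - p ord0 c) * ln (p ord0 c) * y ord0 c
                  + p ord0 c * ln (1 - p ord0 c) * (1 - y ord0 c)).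

Inductive score_kind := MSP | ENT | CE | ME.

Definition score_fun (k : score_kind) C : 'rV[R]_C -> 'rV[R]_C -> R :=
  match k with MSP => @msp_s C | ENT => @ent_s C | CE => @ce_s C | ME => @me_s C end.

Variables (d : measure_display) (X : measurableType d) (n : nat).
Local Notation C := n.+2.
Local Notation Z := (X * 'I_C)%type.

Definition score (k : score_kind) (f : X -> 'rV[R]_C) (z : Z) : R :=
  score_fun k (f z.1) (onehot z.2).

Definition mia (h : Z -> R) (tau : R) (z : Z) : bool := h z < tau.

Definition PS (S : seq Z) (A : pred Z) : R := (count A S)%:R / (size S)%:R.

Definition PD (D : probability Z R) (A : pred Z) : R := fine (D [set z | A z]).

Definition Adv (m : Z -> bool) (S : seq Z) (D : probability Z R) : R :=
  PS S m - PD D m.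

Definition emb (f : X -> 'rV[R]_C) (z : Z) : 'rV[R]_(C + C) :=
  row_mx (f z.1) (onehot z.2).

Definition DQ (f : X -> 'rV[R]_C) (S : seq Z) (D : probability Z R)
  (Q : set 'rV[R]_(C + C)) : R :=
  `| PS S (fun z => `[< Q (emb f z) >]) - PD D (fun z => `[< Q (emb f z) >]) |.

Definition D_cvx (f : X -> 'rV[R]_C) (S : seq Z) (D : probability Z R) : \bar R :=
  ereal_sup [set (DQ f S D Q)%:E | Q in
    [set Q : set 'rV[R]_(C + C) |
       convex_set (Q : set (convex_lmodType 'rV[R]_(C + C)))
       /\ measurable (emb f @^-1` Q)]].

End Defs.

(* For a fixed label c, each score is a convex function of the probability
   vector p = f(x) on (0,1)^C (msp and ent are concave), so the attack's
   acceptance event {score < tau}, or for msp and ent its complement, is the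
   trace on one-hot labels of a convex region A_c.  The regions A_c glue into
   one convex subset of R^{2C}: the set of (p, y) with y in [0,1]^C and
   p in A_c whenever y_c = 1.  Complementing the event only flips the sign of
   the advantage, so Adv <= |P_S(Q) - P_D(Q)| for a convex Q. *)

From HB Require Import structures.
From mathcomp Require Import all_boot all_order all_algebra.
From mathcomp Require Import all_classical all_reals all_analysis.
From mathcomp Require Import ring lra measurable_realfun.
Set Implicit Arguments. Unset Strict Implicit. Unset Printing Implicit Defensive.
Import Order.TTheory GRing.Theory Num.Theory.
Local Open Scope classical_set_scope.
Local Open Scope ring_scope.

Section mix_convexity.
Variables (R : realType) (V : lmodType R).
Implicit Types (A B : set V) (g h : V -> R).

Definition mix_closed A :=
  forall (t : R) x y, 0 < t < 1 -> A x -> A y -> A (t *: x + (1 - t) *: y).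

Definition mix_convex A g := forall (t : R) x y, 0 < t < 1 -> A x -> A y ->
  g (t *: x + (1 - t) *: y) <= t * g x + (1 - t) * g y.

Lemma mix_closed_convex_set A :
  mix_closed A -> convex_set (A : set (convex_lmodType V)).
Proof.
move=> Amix; apply/convex_setW => x y; rewrite !inE => Ax Ay l l0 l1.
by rewrite inE; apply: Amix; rewrite ?l0.
Qed.

Lemma mix_convex_sub A B g : A `<=` B -> mix_convex B g -> mix_convex A g.
Proof. by move=> AB gB t x y t01 /AB Bx /AB By; exact: gB. Qed.

Lemma mix_convexD A g h :
  mix_convex A g -> mix_convex A h -> mix_convex A (fun x => g x + h x).
Proof.
move=> gA hA t x y t01 Ax Ay.
have := gA t x y t01 Ax Ay; have := hA t x y t01 Ax Ay; lra.
Qed.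

Lemma mix_convexZ A (a : R) g :
  0 <= a -> mix_convex A g -> mix_convex A (fun x => a * g x).
Proof.
move=> a0 gA t x y t01 Ax Ay.
have := ler_wpM2l a0 (gA t x y t01 Ax Ay); lra.
Qed.

Lemma mix_convex_sum A (I : Type) (r : seq I) (g : I -> V -> R) :
  (forall i, mix_convex A (g i)) -> mix_convex A (fun x => \sum_(i <- r) g i x).
Proof.
move=> gA t x y t01 Ax Ay; rewrite !mulr_sumr -big_split /=.
by apply: ler_sum => i _; exact: gA.
Qed.

Lemma mix_closed_sublevel A g (b : R) : mix_closed A -> mix_convex A g ->
  mix_closed [set x | A x /\ g x <= b].
Proof.
move=> Amix gA t x y t01 [Ax gx] [Ay gy]; split; first exact: Amix.
apply: le_trans (gA t x y t01 Ax Ay) _; case/andP: t01 => t0 t1; nra.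
Qed.

Lemma mix_closed_strict_sublevel A g (b : R) : mix_closed A -> mix_convex A g ->
  mix_closed [set x | A x /\ g x < b].
Proof.
move=> Amix gA t x y t01 [Ax gx] [Ay gy]; split; first exact: Amix.
apply: le_lt_trans (gA t x y t01 Ax Ay) _; case/andP: t01 => t0 t1; nra.
Qed.

End mix_convexity.

Section entropy_terms.
Variable R : realType.
Implicit Types a b c x : R.

Lemma ln_le_subr1 x : 0 < x -> ln x <= x - 1.
Proof.
move=> x0; have := @le_ln1Dx R (x - 1).
rewrite [1 + _]addrC subrK; apply; lra.
Qed.

Lemma mul_lnB_le c x : 0 < c -> 0 < x -> c * (ln x - ln c) <= x - c.
Proof.
move=> c0 x0; have := ler_wpM2l (ltW c0) (ln_le_subr1 (divr_gt0 x0 c0)).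
by rewrite ln_div ?posrE // mulrBr mulrBr mulrCA divff ?gt_eqF // !mulr1.
Qed.

Lemma mix_convex_xlnx : mix_convex [set x : R^o | 0 < x] (fun x => x * ln x).
Proof.
move=> t a b /andP[t0 t1] /= a0 b0.
set x := t * a + (1 - t) * b.
have x0 : 0 < x by rewrite /x; nra.
(* Tangent-line bounds at a and b, averaged with weights t and 1 - t. *)
have := ler_wpM2l (ltW t0) (mul_lnB_le a0 x0).
have t1' : 0 <= 1 - t by lra.
have := ler_wpM2l t1' (mul_lnB_le b0 x0).
have -> : x * ln x = t * (a * ln x) + (1 - t) * (b * ln x) by rewrite /x; ring.
have : t * (x - a) + (1 - t) * (x - b) = 0 by rewrite /x; ring.
lra.
Qed.

Lemma mix_convex_Nln : mix_convex [set x : R^o | 0 < x] (fun x => - ln x).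
Proof.
move=> t a b /andP[t0 t1] /= a0 b0.
have := @concave_ln R (Itv01 (ltW t0) (ltW t1)) a b a0 b0.
rewrite !convRE /= /unstable.onem; lra.
Qed.

Lemma mix_convex_N1Bln :
  mix_convex [set x : R^o | 0 < x] (fun x => - ((1 - x) * ln x)).
Proof.
have -> : (fun x : R^o => - ((1 - x) * ln x)) = (fun x => - ln x + x * ln x).
  by apply/funext => x; ring.
exact: mix_convexD mix_convex_Nln mix_convex_xlnx.
Qed.

Lemma mix_convex_Nln1B :
  mix_convex [set x : R^o | x < 1] (fun x => - (x * ln (1 - x))).
Proof.
move=> t a b t01 /= a1 b1.
have := @mix_convex_N1Bln t (1 - a) (1 - b) t01.
rewrite /= !subr_gt0 => /(_ a1 b1).
have -> : t * (1 - a) + (1 - t) * (1 - b) = 1 - (t * a + (1 - t) * b) by ring.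
by rewrite !subKr.
Qed.

End entropy_terms.

Section row_coordinates.
Variables (R : realType) (m : nat).

Lemma row_mixE (t : R) (p q : 'rV[R]_m) j :
  (t *: p + (1 - t) *: q) ord0 j = t * p ord0 j + (1 - t) * q ord0 j.
Proof. by rewrite !mxE. Qed.

Lemma mix_closed_coord (P : set R) :
  (forall t a b, 0 < t < 1 -> P a -> P b -> P (t * a + (1 - t) * b)) ->
  mix_closed [set p : 'rV[R]_m | forall j, P (p ord0 j)].
Proof. by move=> Pmix t p q t01 Pp Pq j; rewrite row_mixE; exact: Pmix. Qed.

Lemma mix_convex_coord (P : set R^o) (g : R^o -> R) j : mix_convex P g ->
  mix_convex [set p : 'rV[R]_m | forall i, P (p ord0 i)] (fun p => g (p ord0 j)).
Proof. by move=> gP t p q t01 Pp Pq; rewrite row_mixE; exact: gP. Qed.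

End row_coordinates.

Section labelled_set.
Variables (R : realType) (m : nat) (A : 'I_m -> set 'rV[R]_m).

(* The box constraint on the label block is what makes [labelled_set]
   convex: a mixture of two points of the box can only have label entry 1
   if both endpoints have label entry 1. *)
Definition labelled_set : set 'rV[R]_(m + m) := [set v | forall c,
  0 <= rsubmx v ord0 c <= 1 /\ (rsubmx v ord0 c = 1 -> A c (lsubmx v))].

Lemma labelled_set_onehot p c : labelled_set (row_mx p (onehot R c)) <-> A c p.
Proof.
rewrite /labelled_set /= row_mxKl row_mxKr; split.
  by move=> /(_ c) [_]; apply; rewrite mxE eqxx.
move=> Acp j; rewrite mxE; case: eqP => [->|_]; split => //.
- by rewrite lexx ler01.
- by rewrite lexx ler01.
- by move/eqP; rewrite eq_sym oner_eq0.
Qed.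

Lemma mix_closed_labelled_set :
  (forall c, mix_closed (A c)) -> mix_closed labelled_set.
Proof.
move=> Amix t v w /andP[t0 t1] Av Aw c.
have [/andP[v0 v1] Avc] := Av c; have [/andP[w0 w1] Awc] := Aw c.
rewrite linearD !linearZ /= row_mixE.
split; first by apply/andP; split; nra.
move=> mix1; have ev : rsubmx v ord0 c = 1 by nra.
have ew : rsubmx w ord0 c = 1 by nra.
rewrite linearD !linearZ /=.
by apply: Amix; [rewrite t0 t1 | exact: Avc | exact: Awc].
Qed.

End labelled_set.

Section score_region.
Variables (R : realType) (m : nat).
Implicit Types (c : 'I_m) (tau : R).

(* For msp and ent the convex region is the complement {score >= tau}. *)
Definition superlevel (k : score_kind) : bool :=
  match k with MSP | ENT => true | CE | ME => false end.

Definition score_region (k : score_kind) tau c : set 'rV[R]_m :=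
  match k with
  | MSP => [set p : 'rV[R]_m | forall j, p ord0 j <= - tau]
  | ENT => [set p : 'rV[R]_m | (forall j, 0 < p ord0 j) /\
                    \sum_(j < m) p ord0 j * ln (p ord0 j) <= - tau]
  | CE => [set p : 'rV[R]_m | expR (- tau) < p ord0 c]
  | ME => [set p : 'rV[R]_m | (forall j, 0 < p ord0 j < 1) /\
                   me_s p (onehot R c) < tau]
  end.

Lemma mix_convex_me_s (y : 'rV[R]_m) : (forall j, 0 <= y ord0 j <= 1) ->
  mix_convex [set p : 'rV[R]_m | forall j, 0 < p ord0 j < 1] (fun p => me_s p y).
Proof.
move=> y01.
have -> : (fun p => me_s p y) = fun p => \sum_(j < m)
    (y ord0 j * - ((1 - p ord0 j) * ln (p ord0 j))
     + (1 - y ord0 j) * - (p ord0 j * ln (1 - p ord0 j))).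
  by apply/funext => p; rewrite /me_s -sumrN; apply: eq_bigr => j _; ring.
apply: mix_convex_sum => j; have /andP[y0 y1] := y01 j.
apply: mix_convexD; apply: mix_convexZ; rewrite ?subr_ge0 //.
- apply: mix_convex_sub (mix_convex_coord j (@mix_convex_N1Bln R)).
  by move=> p p01 i; case/andP: (p01 i).
- apply: mix_convex_sub (mix_convex_coord j (@mix_convex_Nln1B R)).
  by move=> p p01 i; case/andP: (p01 i).
Qed.

Lemma mix_closed_score_region k tau c : mix_closed (score_region k tau c).
Proof.
case: k => /=.
- apply: (@mix_closed_coord _ _ [set x | x <= - tau]).
  by move=> t a b /andP[t0 t1] /= ha hb; nra.
- apply: mix_closed_sublevel.
    apply: (@mix_closed_coord _ _ [set x | 0 < x]).
    by move=> t a b /andP[t0 t1] /= ha hb; nra.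
  apply: mix_convex_sum => j; exact: mix_convex_coord (@mix_convex_xlnx R).
- by move=> t p q /andP[t0 t1] /= hp hq; rewrite row_mixE; nra.
- apply: mix_closed_strict_sublevel; last first.
    apply: mix_convex_me_s => j; rewrite mxE.
    by case: (j == c); rewrite /= ?ler01 lexx.
  apply: (@mix_closed_coord _ _ [set x | 0 < x < 1]).
  move=> t a b /andP[t0 t1] /= /andP[a0 a1] /andP[b0 b1].
  by apply/andP; split; nra.
Qed.

Lemma sum_onehotM c (F : 'I_m -> R) : \sum_(j < m) onehot R c ord0 j * F j = F c.
Proof.
rewrite (bigD1 c) //= mxE eqxx mul1r big1 ?addr0 // => j /negbTE jc.
by rewrite mxE jc mul0r.
Qed.

Lemma score_regionP k tau c (p : 'rV[R]_m) : (forall j, 0 < p ord0 j < 1) ->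
  score_region k tau c p <-> (score_fun k p (onehot R c) < tau) (+) superlevel k.
Proof.
move=> p01; have /andP[pc0 _] := p01 c.
case: k => /=; rewrite ?addbT ?addbF.
- rewrite /msp_s -leNgt lerNr; split => [pj|pmax j].
    by apply: bigmax_le => //; exact: le_trans (ltW pc0) (pj c).
  exact: le_trans (le_bigmax _ _ _) pmax.
- rewrite /ent_s -leNgt lerNr; split => [[_ //]|]; split => // j.
  by case/andP: (p01 j).
- rewrite /ce_s (sum_onehotM c (fun j => ln (p ord0 j))) ltrNl.
  by rewrite -{1}(lnK pc0) ltr_expR.
- by split => [[_ //]|].
Qed.

End score_region.

Section advantage.
Variables (R : realType) (d : measure_display) (X : measurableType d) (n : nat).
Variables (f : X -> 'rV[R]_n.+2) (S : seq (X * 'I_n.+2)).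
Variable D : probability (X * 'I_n.+2)%type R.
Hypothesis S_ne : S != [::].
Local Notation Z := (X * 'I_n.+2)%type.

Lemma PS_predC (A : pred Z) : PS R S (predC A) = 1 - PS R S A.
Proof.
have : (size S)%:R != 0 :> R by rewrite pnatr_eq0 size_eq0.
by rewrite /PS -(count_predC A S) natrD => S0; field.
Qed.

Lemma PD_predC (A : pred Z) : measurable [set z | A z] ->
  PD D (predC A) = 1 - PD D A.
Proof.
move=> Ameas; rewrite /PD (_ : [set z | predC A z] = ~` [set z | A z]).
  by rewrite probability_setC // fineB ?fin_num_measure.
by apply/seteqP; split => z /= /negP.
Qed.

Lemma Adv_predC (A : pred Z) : measurable [set z | A z] ->
  Adv (predC A) S D = - Adv A S D.
Proof. by move=> Ameas; rewrite /Adv PS_predC PD_predC //; ring. Qed.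

Lemma DQ_le_D_cvx Q : mix_closed Q -> measurable (emb f @^-1` Q) ->
  ((DQ f S D Q)%:E <= D_cvx f S D)%E.
Proof.
move=> Qmix Qmeas; apply: ereal_sup_ubound; exists Q => //.
by split => //; exact: mix_closed_convex_set.
Qed.

Lemma measurable_addb (A : pred Z) (b : bool) :
  measurable [set z | A z] -> measurable [set z | A z (+) b].
Proof.
move=> Ameas; case: b.
  rewrite (_ : [set z | _] = ~` [set z | A z]); first exact: measurableC.
  by apply/seteqP; split => z /=; rewrite addbT => /negP.
rewrite (_ : [set z | _] = [set z | A z]) //.
by apply/seteqP; split => z /=; rewrite addbF.
Qed.

(* [b] records whether [Q] describes the attack or its complement. *)
Lemma Adv_le_D_cvx (A : pred Z) Q (b : bool) :
  mix_closed Q -> measurable [set z | A z] ->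
  (forall z, Q (emb f z) <-> A z (+) b) ->
  ((Adv A S D)%:E <= D_cvx f S D)%E.
Proof.
move=> Qmix Ameas QA.
have Qmeas : measurable (emb f @^-1` Q).
  rewrite (_ : _ @^-1` _ = [set z | A z (+) b]); first exact: measurable_addb.
  by apply/seteqP; split => z /QA.
apply: le_trans (DQ_le_D_cvx Qmix Qmeas); rewrite lee_fin /DQ.
have -> : (fun z => `[< Q (emb f z) >]) = (fun z => A z (+) b).
  by apply/funext => z; apply/asboolP/idP => /QA.
case: b {QA Qmeas}.
  have -> : (fun z => A z (+) true) = predC A by apply/funext => z; rewrite addbT.
  by rewrite -[X in `|X|]/(Adv (predC A) S D) Adv_predC // normrN ler_norm.
have -> : (fun z => A z (+) false) = A by apply/funext => z; rewrite addbF.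
exact: ler_norm.
Qed.

End advantage.

Lemma measurable_fun_bigmax (R : realType) (d : measure_display)
    (T : measurableType d) (D : set T) (I : Type) (r : seq I) (F : I -> T -> R) :
  (forall i, measurable_fun D (F i)) ->
  measurable_fun D (fun x => \big[Num.max/0]_(i <- r) F i x).
Proof.
move=> mF; elim: r => [|i r IH].
  by under eq_fun do rewrite big_nil; exact: measurable_cst.
under eq_fun do rewrite big_cons; exact: measurable_maxr (mF i) IH.
Qed.

Section measurable_score.
Variables (R : realType) (d : measure_display) (X : measurableType d) (n : nat).
Variable f : X -> 'rV[R]_n.+2.
Hypothesis f_meas : forall c : 'I_n.+2, measurable_fun setT (fun x => f x ord0 c).
Local Notation Z := (X * 'I_n.+2)%type.

Let measurable_prob c : measurable_fun setT (fun z : Z => f z.1 ord0 c).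
Proof. exact: measurableT_comp (f_meas c) measurable_fst. Qed.

Let measurable_label c : measurable_fun setT (fun z : Z => onehot R z.2 ord0 c).
Proof. exact: (measurableT_comp (f := fun i : 'I_n.+2 => onehot R i ord0 c)). Qed.

Let measurable_ln_prob c : measurable_fun setT (fun z : Z => ln (f z.1 ord0 c)).
Proof. exact: measurableT_comp (@measurable_ln R) (measurable_prob c). Qed.

Let measurable_ln1B_prob c :
  measurable_fun setT (fun z : Z => ln (1 - f z.1 ord0 c)).
Proof.
apply: measurableT_comp (@measurable_ln R) _.
exact: measurable_funB (measurable_prob c).
Qed.

Lemma measurable_score k : measurable_fun setT (score k f).
Proof.
rewrite /score; case: k => /=; apply: measurable_funN.
- exact: measurable_fun_bigmax.
- by apply: measurable_sum => c; exact: measurable_funM.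
- by apply: measurable_sum => c; exact: measurable_funM.
apply: measurable_sum => c; apply: measurable_funD; apply: measurable_funM.
- by apply: measurable_funM => //; exact: measurable_funB.
- by [].
- exact: measurable_funM.
- exact: measurable_funB.
Qed.

Lemma measurable_mia k tau : measurable [set z | mia (score k f) tau z].
Proof.
have := measurable_fun_ltr (measurable_score k) (measurable_cst tau) measurableT.
by move=> /(_ [set true] I); rewrite setTI.
Qed.

End measurable_score.

Theorem theorem1 (R : realType) (d : measure_display) (X : measurableType d)
  (n : nat) (f : X -> 'rV[R]_(n.+2))
  (f_meas : forall c : 'I_n.+2, measurable_fun setT (fun x => f x ord0 c))
  (f_open01 : forall x c, 0 < f x ord0 c < 1)
  (f_sum1 : forall x, \sum_(c < n.+2) f x ord0 c = 1)
  (S : seq (X * 'I_n.+2)) (S_ne : S != [::])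
  (D : probability (X * 'I_n.+2)%type R)
  (k : score_kind) (tau : R) :
  ((Adv (mia (score k f) tau) S D)%:E <= D_cvx f S D)%E.
Proof.
apply: (@Adv_le_D_cvx _ _ _ _ f S D S_ne _
  (labelled_set (score_region k tau)) (superlevel k)).
- by apply: mix_closed_labelled_set => c; exact: mix_closed_score_region.
- exact: measurable_mia.
- move=> z; rewrite /emb labelled_set_onehot.
  exact: score_regionP (f_open01 z.1).
Qed.
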